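(* Let $s$ be a CorePolyC statement and $\ell\in\{\#t,\#f\}$. There are constants $C,d,k$ (depending only on $s$) such that for every consistent pair $(\Gamma,\Sigma)$ with $\Gamma,\ell\vdash s:\Gamma'$ and $\Sigma\vdash s\Downarrow\Sigma'$ for some $\Gamma',\Sigma'$: (1) if $\ell=\#t$, then $\mathrm{sz}(\Sigma')\mathbin{\dot-}\mathrm{sz}(\Sigma)\le C\,(\mathrm{sz}(\Sigma|_{\mathrm{dom}_I(\Gamma)})^{d}+1)$; (2) if $\ell=\#f$, then $\mathrm{sz}(\Sigma')\mathbin{\dot-}\mathrm{sz}(\Sigma)\le C\,(\mathrm{sz}(\Sigma)^{d^{k}}+1)$.
   Context: CorePolyC. Types are $\mathtt{iint},\mathtt{int},\mathtt{bool}$; $\mathsf{Int}=\{\mathtt{iint},\mathtt{int}\}$, ordered by $\mathtt{iint}\preccurlyeq\mathtt{int}$. Values are unbounded integers ($\mathbb Z$) and booleans $\#t,\#f$. A value $v$ is consistent with a type $t$ if ($v\in\mathbb Z$ and $t\in\mathsf{Int}$) or ($v$ boolean and $t=\mathtt{bool}$). Expressions: variables $x$; constants (nonempty decimal digit strings denoting natural numbers; $\mathtt{true}$, $\mathtt{false}$); operator applications $\mathtt{op}(e_1,\dots,e_m)$; parenthesized $(e)$. Operators and semantics: unary $-$ (negation); binary $+,-,/,\%$ (integer addition, subtraction, division, remainder, with division and remainder by $0$ returning $0$); $\mathtt{size}$, with $\mathtt{size}(v)=\lceil\log_2(\mathrm{abs}(v)+1)\rceil$; comparisons $\texttt{>=},\texttt{<=},\texttt{>},\texttt{<},\texttt{==},\texttt{!=}$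 on integers returning booleans; boolean $\texttt{!},\texttt{\&\&},\texttt{||}$. Statements: declaration $t\ x;$; assignment $x=e;$; block $\{s_1\dots s_m\}$; conditional $\mathbf{if}(e)\ s_1\ \mathbf{else}\ s_2$; loop $\mathbf{for}(x<\mathtt{size}(e))\ s$ (loop bounds are always syntactically of the form $\mathtt{size}(e)$). Semantics (big-step). A store $\Sigma$ is a finite partial map from variables to values; $\Sigma[x\mapsto v]$ is the update. $\Sigma\vdash e\Downarrow v$: a variable $x\in\mathrm{dom}\,\Sigma$ evaluates to $\Sigma(x)$, constants to their value, $\mathtt{op}(e_1,\dots,e_m)$ to $\mathtt{op}$ applied to the values of the $e_i$. $\Sigma\vdash s\Downarrow\Sigma'$: $t\ x;$ gives $\Sigma[x\mapsto 0]$ if $t\in\mathsf{Int}$ and $\Sigma[x\mapsto\#f]$ if $t=\mathtt{bool}$; $x=e;$ (with $x\in\mathrm{dom}\,\Sigma$) gives $\Sigma[x\mapsto v]$ where $\Sigma\vdash e\Downarrow v$; a sequence or block executes its statements in order threading the store (a block returns the final store); a conditional evaluates its guard to a boolean and executes the corresponding branch; $\mathbf{for}(x<e)\ s$ evaluates $e$ once to an integer $i$, sets $\Sigma_0=\Sigma$, executes $s$ from $\Sigma_j[x\mapsto j]$ obtaining $\Sigma_{j+1}$ for $j=0,\dots,i-1$, and ends in $\Sigma_i$ (i.e. in $\Sigma$ if $i\le 0$). Type system. A typing environment $\Gamma$ is a finite partial map from variables to types; $\ell\in\{\#t,\#f\}$ is the loop indicator. Expression typing $\Gamma,\ell\vdash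 e:t$: a variable $x\in\mathrm{dom}\,\Gamma$ has type $\Gamma(x)$; digit literals have type $\mathtt{iint}$, $\mathtt{true},\mathtt{false}$ have type $\mathtt{bool}$; $\texttt{!},\texttt{\&\&},\texttt{||}$ take $\mathtt{bool}$ arguments to $\mathtt{bool}$; comparisons take arguments with types in $\mathsf{Int}$ to $\mathtt{bool}$; $+,-,/,\%$ take arguments with types in $\mathsf{Int}$ to their supremum under $\preccurlyeq$ ($\mathtt{iint}$ iff all arguments are $\mathtt{iint}$); $\mathtt{size}$ takes only an $\mathtt{iint}$ argument, giving $\mathtt{iint}$; parentheses preserve types. Statement typing $\Gamma,\ell\vdash s:\Gamma'$: $t\ x;$ is typable iff $x\notin\mathrm{dom}\,\Gamma$ and not($\ell=\#t$ and $t=\mathtt{iint}$), giving $\Gamma[x\mapsto t]$; $x=e;$ is typable iff $x\in\mathrm{dom}\,\Gamma$, not($\ell=\#t$ and $\Gamma(x)=\mathtt{iint}$), and $\Gamma,\ell\vdash e:t$ with $t,\Gamma(x)$ both in $\mathsf{Int}$ or both $\mathtt{bool}$, giving $\Gamma$; a sequence $s_1\dots s_m$ threads $\Gamma_0=\Gamma$, $\Gamma_{i-1},\ell\vdash s_i:\Gamma_i$, giving $\Gamma_m$; a block $\{\tilde s\}$ is typable if its sequence is, giving $\Gamma$; a conditional needs a guard of type $\mathtt{bool}$ and both branches typable under $\Gamma,\ell$, giving $\Gamma$; $\mathbf{for}(x<e)\ s$ needs $\Gamma,\ell\vdash e:\mathtt{iint}$, $x\notin\mathrm{dom}\,\Gamma$,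 and $\Gamma[x\mapsto\mathtt{iint}],\#t\vdash s:\Gamma'$ for some $\Gamma'$, giving $\Gamma$. A store $\Sigma$ and typing environment $\Gamma$ are consistent (form a consistent pair) if $\mathrm{dom}\,\Gamma\subseteq\mathrm{dom}\,\Sigma$ and $\Sigma(x)$ is consistent with $\Gamma(x)$ for all $x\in\mathrm{dom}\,\Gamma$. $\mathrm{dom}_I(\Gamma)=\{x\in\mathrm{dom}\,\Gamma:\Gamma(x)=\mathtt{iint}\}$ and $\Sigma|_D$ is the restriction of $\Sigma$ to $D$. Sizes: $\mathrm{sz}(v)=\lceil\log_2(\mathrm{abs}(v)+1)\rceil$ for $v\in\mathbb Z$, $\mathrm{sz}(\#t)=\mathrm{sz}(\#f)=1$, $\mathrm{sz}(\Sigma)=\max_{x\in\mathrm{dom}\,\Sigma}\mathrm{sz}(\Sigma(x))$ ($0$ if empty). $a\mathbin{\dot-}b=\max(a-b,0)$. *)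

From Stdlib Require Import ZArith List Arith.
Import ListNotations.
Open Scope Z_scope.

Definition var := nat.

Inductive ty := TIint | TInt | TBool.

Definition isInt (t : ty) : Prop := t = TIint \/ t = TInt.

Definition tsup (t1 t2 : ty) : ty :=
  match t1, t2 with TIint, TIint => TIint | _, _ => TInt end.

Inductive unop := ONeg | OSize | ONot.
Inductive binop :=
  | OAdd | OSub | ODiv | OMod
  | OGe | OLe | OGt | OLt | OEq | ONe
  | OAnd | OOr.

Inductive expr :=
  | EVar (x : var)
  | EConst (n : nat)          (* decimal digit literal denoting a natural *)
  | ETrue | EFalse
  | EUn (o : unop) (e : expr)
  | EBin (o : binop) (e1 e2 : expr)
  | EParen (e : expr).

(* for(x < size(e)) s  is represented by  SFor x e s  (bound is size(e)) *)
Inductive stmt :=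
  | SDecl (t : ty) (x : var)
  | SAssign (x : var) (e : expr)
  | SBlock (ss : list stmt)
  | SIf (e : expr) (s1 s2 : stmt)
  | SFor (x : var) (e : expr) (s : stmt).

Inductive val := VInt (z : Z) | VBool (b : bool).

Definition pmap (A : Type) := list (var * A).

Fixpoint lookup {A} (m : pmap A) (x : var) : option A :=
  match m with
  | [] => None
  | (y, a) :: m' => if Nat.eqb x y then Some a else lookup m' x
  end.

Definition update {A} (m : pmap A) (x : var) (a : A) : pmap A := (x, a) :: m.

Definition in_dom {A} (m : pmap A) (x : var) : Prop := lookup m x <> None.

Definition store := pmap val.
Definition tenv := pmap ty.

Definition zsize (v : Z) : Z := Z.log2_up (Z.abs v + 1).

Definition zdiv (a b : Z) : Z := if b =? 0 then 0 else Z.quot a b.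
Definition zmod (a b : Z) : Z := if b =? 0 then 0 else Z.rem a b.

Definition eval_un (o : unop) (v : val) : option val :=
  match o, v with
  | ONeg, VInt z => Some (VInt (- z))
  | OSize, VInt z => Some (VInt (zsize z))
  | ONot, VBool b => Some (VBool (negb b))
  | _, _ => None
  end.

Definition eval_bin (o : binop) (v1 v2 : val) : option val :=
  match o, v1, v2 with
  | OAdd, VInt a, VInt b => Some (VInt (a + b))
  | OSub, VInt a, VInt b => Some (VInt (a - b))
  | ODiv, VInt a, VInt b => Some (VInt (zdiv a b))
  | OMod, VInt a, VInt b => Some (VInt (zmod a b))
  | OGe, VInt a, VInt b => Some (VBool (b <=? a))
  | OLe, VInt a, VInt b => Some (VBool (a <=? b))
  | OGt, VInt a, VInt b => Some (VBool (b <? a))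
  | OLt, VInt a, VInt b => Some (VBool (a <? b))
  | OEq, VInt a, VInt b => Some (VBool (a =? b))
  | ONe, VInt a, VInt b => Some (VBool (negb (a =? b)))
  | OAnd, VBool a, VBool b => Some (VBool (a && b))
  | OOr, VBool a, VBool b => Some (VBool (a || b))
  | _, _, _ => None
  end.

Inductive eval : store -> expr -> val -> Prop :=
  | Ev_var S x v : lookup S x = Some v -> eval S (EVar x) v
  | Ev_const S n : eval S (EConst n) (VInt (Z.of_nat n))
  | Ev_true S : eval S ETrue (VBool true)
  | Ev_false S : eval S EFalse (VBool false)
  | Ev_un S o e v w : eval S e v -> eval_un o v = Some w -> eval S (EUn o e) w
  | Ev_bin S o e1 e2 v1 v2 w :
      eval S e1 v1 -> eval S e2 v2 -> eval_bin o v1 v2 = Some w ->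
      eval S (EBin o e1 e2) w
  | Ev_paren S e v : eval S e v -> eval S (EParen e) v.

Inductive exec : store -> stmt -> store -> Prop :=
  | Ex_decl_int S t x : isInt t -> exec S (SDecl t x) (update S x (VInt 0))
  | Ex_decl_bool S x : exec S (SDecl TBool x) (update S x (VBool false))
  | Ex_assign S x e v :
      in_dom S x -> eval S e v -> exec S (SAssign x e) (update S x v)
  | Ex_block S ss S' : exec_seq S ss S' -> exec S (SBlock ss) S'
  | Ex_if_t S e s1 s2 S' : eval S e (VBool true) -> exec S s1 S' -> exec S (SIf e s1 s2) S'
  | Ex_if_f S e s1 s2 S' : eval S e (VBool false) -> exec S s2 S' -> exec S (SIf e s1 s2) S'
  | Ex_for S x e s i S' :
      eval S (EUn OSize e) (VInt i) -> exec_loop S x s 0 i S' ->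
      exec S (SFor x e s) S'
with exec_seq : store -> list stmt -> store -> Prop :=
  | Ex_nil S : exec_seq S [] S
  | Ex_cons S s ss S1 S2 : exec S s S1 -> exec_seq S1 ss S2 -> exec_seq S (s :: ss) S2
(* exec_loop S x s j i S' : starting from Sigma_j = S, run iterations j..i-1 *)
with exec_loop : store -> var -> stmt -> Z -> Z -> store -> Prop :=
  | Ex_loop_done S x s j i : i <= j -> exec_loop S x s j i S
  | Ex_loop_step S x s j i S1 S' :
      j < i -> exec (update S x (VInt j)) s S1 -> exec_loop S1 x s (j + 1) i S' ->
      exec_loop S x s j i S'.

(* ---------- Type system (loop indicator l : bool, true = #t) ---------- *)
Definition un_ty (o : unop) (t : ty) : option ty :=
  match o, t with
  | ONeg, TIint => Some TIint
  | ONeg, TInt => Some TInt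
  | OSize, TIint => Some TIint
  | ONot, TBool => Some TBool
  | _, _ => None
  end.

Definition bin_ty (o : binop) (t1 t2 : ty) : option ty :=
  match o with
  | OAdd | OSub | ODiv | OMod =>
      match t1, t2 with
      | TBool, _ | _, TBool => None
      | _, _ => Some (tsup t1 t2)
      end
  | OGe | OLe | OGt | OLt | OEq | ONe =>
      match t1, t2 with
      | TBool, _ | _, TBool => None
      | _, _ => Some TBool
      end
  | OAnd | OOr =>
      match t1, t2 with
      | TBool, TBool => Some TBool
      | _, _ => None
      end
  end.

Inductive etyp : tenv -> bool -> expr -> ty -> Prop :=
  | Ty_var G l x t : lookup G x = Some t -> etyp G l (EVar x) t
  | Ty_const G l n : etyp G l (EConst n) TIint
  | Ty_true G l : etyp G l ETrue TBool
  | Ty_false G l : etyp G l EFalse TBool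
  | Ty_un G l o e t t' : etyp G l e t -> un_ty o t = Some t' -> etyp G l (EUn o e) t'
  | Ty_bin G l o e1 e2 t1 t2 t :
      etyp G l e1 t1 -> etyp G l e2 t2 -> bin_ty o t1 t2 = Some t ->
      etyp G l (EBin o e1 e2) t
  | Ty_paren G l e t : etyp G l e t -> etyp G l (EParen e) t.

Definition compat (t1 t2 : ty) : Prop :=
  (isInt t1 /\ isInt t2) \/ (t1 = TBool /\ t2 = TBool).

Inductive styp : tenv -> bool -> stmt -> tenv -> Prop :=
  | Ty_decl G l t x :
      lookup G x = None -> ~ (l = true /\ t = TIint) ->
      styp G l (SDecl t x) (update G x t)
  | Ty_assign G l x e tx t :
      lookup G x = Some tx -> ~ (l = true /\ tx = TIint) ->
      etyp G l e t -> compat t tx ->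
      styp G l (SAssign x e) G
  | Ty_block G l ss G' : styp_seq G l ss G' -> styp G l (SBlock ss) G
  | Ty_if G l e s1 s2 G1 G2 :
      etyp G l e TBool -> styp G l s1 G1 -> styp G l s2 G2 ->
      styp G l (SIf e s1 s2) G
  | Ty_for G l x e s G' :
      etyp G l (EUn OSize e) TIint -> lookup G x = None ->
      styp (update G x TIint) true s G' ->
      styp G l (SFor x e s) G
with styp_seq : tenv -> bool -> list stmt -> tenv -> Prop :=
  | Ty_nil G l : styp_seq G l [] G
  | Ty_cons G l s ss G1 G2 :
      styp G l s G1 -> styp_seq G1 l ss G2 -> styp_seq G l (s :: ss) G2.

Definition val_consistent (v : val) (t : ty) : Prop :=
  match v with
  | VInt _ => isInt t
  | VBool _ => t = TBool
  end.

Definition consistent (G : tenv) (S : store) : Prop :=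
  forall x t, lookup G x = Some t ->
    exists v, lookup S x = Some v /\ val_consistent v t.

Definition szv (v : val) : nat :=
  match v with
  | VInt z => Z.to_nat (zsize z)
  | VBool _ => 1%nat
  end.

Definition sz (S : store) : nat :=
  list_max (map (fun x => match lookup S x with Some v => szv v | None => 0%nat end)
                (map fst S)).

Definition sz_restr_I (S : store) (G : tenv) : nat :=
  list_max (map (fun x => match lookup G x, lookup S x with
                          | Some TIint, Some v => szv v
                          | _, _ => 0%nat end)
                (map fst G)).

From Stdlib Require Import ZArith List Arith Lia.
Import ListNotations.

(* Evaluating an expression adds at most a constant to the largest size of the
   variables it reads, and the variables read by an [iint] expression are all of
   type [iint].  Inside a loop no [iint] variable can be declared or assigned, so
   the sizes of the [iint] variables are frozen there; a loop bound [size(e)] is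
   then at most [n + c] when the [iint] variables have size at most [n], and each
   iteration adds at most a polynomial in [n] by induction on the body.  Hence a
   statement under a loop grows the store by a polynomial in the [iint] sizes.
   At top level, [iint] variables may change, but every statement maps a store of
   size [m] to one of size polynomial in [m], and polynomials compose along a
   block, raising the degree. *)

Lemma zsize_nonneg z : (0 <= zsize z)%Z.
Proof. apply Z.log2_up_nonneg. Qed.

Lemma zsize_le_iff z k : (0 <= k)%Z -> (zsize z <= k)%Z <-> (Z.abs z + 1 <= 2 ^ k)%Z.
Proof. intros Hk. unfold zsize. rewrite <- Z.log2_up_le_pow2; [tauto | lia]. Qed.

Lemma zsize_le_abs a b : (Z.abs a <= Z.abs b)%Z -> (zsize a <= zsize b)%Z.
Proof. intros; unfold zsize; apply Z.log2_up_le_mono; lia. Qed.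

Lemma zsize_le_max_succ a b c : (Z.abs c <= Z.abs a + Z.abs b)%Z ->
  (zsize c <= Z.max (zsize a) (zsize b) + 1)%Z.
Proof.
  intros Habc. pose proof (zsize_nonneg a). pose proof (zsize_nonneg b).
  set (k := Z.max (zsize a) (zsize b)).
  assert (Ha : (Z.abs a + 1 <= 2 ^ k)%Z) by (apply zsize_le_iff; unfold k; lia).
  assert (Hb : (Z.abs b + 1 <= 2 ^ k)%Z) by (apply zsize_le_iff; unfold k; lia).
  apply zsize_le_iff; [unfold k; lia |].
  rewrite Z.pow_add_r by (unfold k; lia). lia.
Qed.

Lemma zsize_le_id w : (0 <= w)%Z -> (zsize w <= w)%Z.
Proof.
  intros Hw. apply zsize_le_iff; auto.
  pose proof (Z.pow_gt_lin_r 2 w ltac:(lia) Hw). lia.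
Qed.

Lemma zsize_zdiv_le a b : (zsize (zdiv a b) <= zsize a)%Z.
Proof.
  apply zsize_le_abs. unfold zdiv. destruct (Z.eqb_spec b 0); [simpl; lia |].
  rewrite <- Z.quot_abs by auto.
  pose proof (Z.quot_pos (Z.abs a) (Z.abs b) ltac:(lia) ltac:(lia)).
  assert (Z.abs a ÷ Z.abs b <= Z.abs a)%Z by (apply Z.quot_le_upper_bound; nia).
  lia.
Qed.

Lemma zsize_zmod_le a b : (zsize (zmod a b) <= zsize a)%Z.
Proof.
  apply zsize_le_abs. unfold zmod. destruct (Z.eqb_spec b 0); [simpl; lia |].
  rewrite <- Z.rem_abs by auto.
  pose proof (Z.rem_le (Z.abs a) (Z.abs b) ltac:(lia) ltac:(lia)).
  pose proof (Z.rem_nonneg (Z.abs a) (Z.abs b) ltac:(lia) ltac:(lia)).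
  lia.
Qed.

Lemma szv_VInt_le z (N : nat) : (0 <= z)%Z -> (z <= Z.of_nat N)%Z -> (szv (VInt z) <= N)%nat.
Proof. intros. simpl. pose proof (zsize_le_id z H). pose proof (zsize_nonneg z). lia. Qed.

Open Scope nat_scope.

Lemma one_le_succ_pow m d : 1 <= (m + 1) ^ d.
Proof. pose proof (Nat.pow_nonzero (m + 1) d ltac:(lia)). lia. Qed.

Lemma succ_add_pow_le n c d : (n + c + 1) ^ d <= (c + 1) ^ d * (n + 1) ^ d.
Proof. rewrite <- Nat.pow_mul_l. apply Nat.pow_le_mono_l. nia. Qed.

Lemma poly_bound_add m C1 d1 C2 d2 :
  C1 * (m + 1) ^ d1 + C2 * (m + 1) ^ d2 <= (C1 + C2) * (m + 1) ^ (d1 + d2).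
Proof.
  pose proof (Nat.pow_le_mono_r (m + 1) d1 (d1 + d2) ltac:(lia) ltac:(lia)).
  pose proof (Nat.pow_le_mono_r (m + 1) d2 (d1 + d2) ltac:(lia) ltac:(lia)). nia.
Qed.

Lemma poly_bound_comp x m C1 d1 C2 d2 : x <= C1 * (m + 1) ^ d1 ->
  C2 * (x + 1) ^ d2 <= C2 * (C1 + 1) ^ d2 * (m + 1) ^ (d1 * d2).
Proof.
  intros Hx. pose proof (one_le_succ_pow m d1).
  rewrite <- Nat.mul_assoc. apply Nat.mul_le_mono_l.
  rewrite Nat.pow_mul_r, <- Nat.pow_mul_l. apply Nat.pow_le_mono_l. nia.
Qed.

Lemma poly_bound_iterate N C d : N * (N + C * (N + 1) ^ d) <= (C + 1) * (N + 1) ^ (d + 2).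
Proof.
  rewrite Nat.pow_add_r. pose proof (one_le_succ_pow N d).
  set (P := (N + 1) ^ d) in *. simpl. nia.
Qed.

Lemma poly_bound_absorb m C d : m + C * (m + 1) ^ d <= (C + 1) * (m + 1) ^ (d + 1).
Proof.
  rewrite Nat.pow_add_r. pose proof (one_le_succ_pow m d).
  set (P := (m + 1) ^ d) in *. simpl. nia.
Qed.

Lemma succ_pow_le n d : (n + 1) ^ d <= 2 ^ d * (n ^ d + 1).
Proof.
  destruct n as [|n].
  - rewrite Nat.pow_1_l. pose proof (Nat.pow_nonzero 2 d). lia.
  - assert ((S n + 1) ^ d <= (2 * S n) ^ d) by (apply Nat.pow_le_mono_l; lia).
    rewrite Nat.pow_mul_l in H. lia.
Qed.

Lemma lookup_in_keys {A} (m : pmap A) x a : lookup m x = Some a -> In x (map fst m).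
Proof.
  induction m as [|[y b] m IH]; simpl; [discriminate |].
  destruct (Nat.eqb_spec x y); auto.
Qed.

Lemma le_list_max_map (f : var -> nat) l x : In x l -> f x <= list_max (map f l).
Proof.
  intros Hx. pose proof (proj1 (list_max_le (map f l) _) (le_n _)) as Hmax.
  rewrite Forall_forall in Hmax. apply Hmax, in_map, Hx.
Qed.

Lemma szv_le_sz S x v : lookup S x = Some v -> szv v <= sz S.
Proof.
  intros Hx. unfold sz.
  pose proof (le_list_max_map (fun x => match lookup S x with
    Some v => szv v | None => 0 end) (map fst S) x (lookup_in_keys _ _ _ Hx)) as Hle.
  simpl in Hle. rewrite Hx in Hle. exact Hle.
Qed.

Lemma sz_update_le S x v : sz (update S x v) <= Nat.max (sz S) (szv v).
Proof.
  unfold sz at 1. apply list_max_le, Forall_forall.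
  intros k Hk. apply in_map_iff in Hk. destruct Hk as [y [<- _]].
  simpl. destruct (Nat.eqb y x); [lia |].
  destruct (lookup S y) eqn:Hy; [apply szv_le_sz in Hy |]; lia.
Qed.

Definition iint_bounded (G : tenv) (S : store) (n : nat) : Prop :=
  forall x u, lookup G x = Some TIint -> lookup S x = Some u -> szv u <= n.

Lemma iint_bounded_sz G S : iint_bounded G S (sz S).
Proof. intros x u _ Hx. eapply szv_le_sz; eauto. Qed.

Lemma iint_bounded_sz_restr_I G S : iint_bounded G S (sz_restr_I S G).
Proof.
  intros x u HG HS. unfold sz_restr_I.
  pose proof (le_list_max_map (fun x => match lookup G x, lookup S x with
    | Some TIint, Some v => szv v | _, _ => 0 end) (map fst G) x
    (lookup_in_keys _ _ _ HG)) as Hle.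
  simpl in Hle. rewrite HG, HS in Hle. exact Hle.
Qed.

Fixpoint expr_vars_sat (Q : var -> Prop) (e : expr) : Prop :=
  match e with
  | EVar x => Q x
  | EConst _ | ETrue | EFalse => True
  | EUn _ e | EParen e => expr_vars_sat Q e
  | EBin _ e1 e2 => expr_vars_sat Q e1 /\ expr_vars_sat Q e2
  end.

Lemma expr_vars_sat_True e : expr_vars_sat (fun _ => True) e.
Proof. induction e; simpl; auto. Qed.

(* Each operator adds at most one bit to the sizes of its arguments. *)
Fixpoint expr_weight (e : expr) : nat :=
  match e with
  | EVar _ => 0
  | EConst n => Z.to_nat (zsize (Z.of_nat n)) + 1
  | ETrue | EFalse => 1
  | EUn _ e => expr_weight e + 1
  | EBin _ e1 e2 => expr_weight e1 + expr_weight e2 + 1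
  | EParen e => expr_weight e
  end.

Lemma eval_szv_le S e v Q M : eval S e v -> expr_vars_sat Q e ->
  (forall x u, Q x -> lookup S x = Some u -> szv u <= M) ->
  szv v <= M + expr_weight e.
Proof.
  intros Hev. revert Q M.
  induction Hev as [S x v Hx | | | | S o e v w _ IH Hw | S o e1 e2 v1 v2 w _ IH1 _ IH2 Hw
                   | S e v _ IH]; intros Q M HQe HM; simpl in *.
  - pose proof (HM _ _ HQe Hx). lia.
  - lia.
  - lia.
  - lia.
  - specialize (IH Q M HQe HM).
    destruct o, v; inversion Hw; subst; simpl in *; try lia.
    + unfold zsize in *. rewrite Z.abs_opp. lia.
    + pose proof (zsize_le_id (zsize z) (zsize_nonneg z)).
      pose proof (zsize_nonneg (zsize z)). lia.
  - destruct HQe as [HQ1 HQ2].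
    specialize (IH1 Q M HQ1 HM). specialize (IH2 Q M HQ2 HM).
    destruct o, v1 as [a|], v2 as [c|]; inversion Hw; subst; simpl in *; try lia;
      pose proof (zsize_nonneg a); pose proof (zsize_nonneg c).
    + pose proof (zsize_le_max_succ a c (a + c) ltac:(lia)).
      pose proof (zsize_nonneg (a + c)). lia.
    + pose proof (zsize_le_max_succ a c (a - c) ltac:(lia)).
      pose proof (zsize_nonneg (a - c)). lia.
    + pose proof (zsize_zdiv_le a c). pose proof (zsize_nonneg (zdiv a c)). lia.
    + pose proof (zsize_zmod_le a c). pose proof (zsize_nonneg (zmod a c)). lia.
  - exact (IH Q M HQe HM).
Qed.

Lemma eval_szv_le_sz S e v : eval S e v -> szv v <= sz S + expr_weight e.
Proof.
  intros Hev. apply (eval_szv_le _ _ _ (fun _ => True) _ Hev (expr_vars_sat_True e)).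
  intros x u _ Hx. eapply szv_le_sz; eauto.
Qed.

Lemma etyp_iint_vars G l e : etyp G l e TIint ->
  expr_vars_sat (fun x => lookup G x = Some TIint) e.
Proof.
  revert G l. induction e; intros G l Hty; inversion Hty; subst; simpl; eauto.
  - destruct o, t; simpl in *; try discriminate; eauto.
  - destruct o, t1, t2; simpl in *; try discriminate; split; eauto.
Qed.

Lemma eval_iint_szv_le G l S e v n : etyp G l e TIint -> eval S e v ->
  iint_bounded G S n -> szv v <= n + expr_weight e.
Proof. intros Hty Hev HS. exact (eval_szv_le _ _ _ _ _ Hev (etyp_iint_vars _ _ _ Hty) HS). Qed.

Lemma sz_exec_decl S t x S' : exec S (SDecl t x) S' -> sz S' <= Nat.max (sz S) 1.
Proof.
  intros Hex. inversion Hex; subst;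
    pose proof (sz_update_le S x (VInt 0)); pose proof (sz_update_le S x (VBool false));
    simpl in *; lia.
Qed.

Lemma sz_exec_assign S x e S' : exec S (SAssign x e) S' -> sz S' <= sz S + expr_weight e.
Proof.
  intros Hex. inversion Hex as [| | ? ? ? v _ Hev | | | |]; subst.
  pose proof (sz_update_le S x v). pose proof (eval_szv_le_sz _ _ _ Hev). lia.
Qed.

Scheme styp_mut := Induction for styp Sort Prop
  with styp_seq_mut := Induction for styp_seq Sort Prop.
Combined Scheme styp_mutind from styp_mut, styp_seq_mut.

Scheme exec_mut := Induction for exec Sort Prop
  with exec_seq_mut := Induction for exec_seq Sort Prop
  with exec_loop_mut := Induction for exec_loop Sort Prop.
Combined Scheme exec_mutind from exec_mut, exec_seq_mut, exec_loop_mut.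

Lemma styp_extends_mut :
  (forall G l s G', styp G l s G' -> forall y t, lookup G y = Some t -> lookup G' y = Some t) /\
  (forall G l ss G', styp_seq G l ss G' ->
     forall y t, lookup G y = Some t -> lookup G' y = Some t).
Proof.
  apply styp_mutind; intros; simpl; auto.
  destruct (Nat.eqb_spec y x); subst; congruence.
Qed.

Lemma styp_extends G l s G' y t : styp G l s G' ->
  lookup G y = Some t -> lookup G' y = Some t.
Proof. intros Hty. exact (proj1 styp_extends_mut _ _ _ _ Hty y t). Qed.

Lemma styp_loop_iint_mut :
  (forall G l s G', styp G l s G' -> l = true ->
     forall y, lookup G' y = Some TIint -> lookup G y = Some TIint) /\
  (forall G l ss G', styp_seq G l ss G' -> l = true ->
     forall y, lookup G' y = Some TIint -> lookup G y = Some TIint).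
Proof.
  apply styp_mutind; try (intros; subst; simpl in *; eauto; fail).
  intros G l t x _ Ht -> y Hy. simpl in Hy.
  destruct (Nat.eqb y x); auto. injection Hy as ->. tauto.
Qed.

Lemma styp_loop_iint G s G' y : styp G true s G' ->
  lookup G' y = Some TIint -> lookup G y = Some TIint.
Proof. intros Hty. exact (proj1 styp_loop_iint_mut _ _ _ _ Hty eq_refl y). Qed.

Definition iint_unchanged (G : tenv) (S S' : store) : Prop :=
  forall y, lookup G y = Some TIint -> lookup S' y = lookup S y.

Lemma iint_unchanged_update G S x v : lookup G x <> Some TIint ->
  iint_unchanged G S (update S x v).
Proof. intros Hx y Hy. simpl. destruct (Nat.eqb_spec y x); congruence. Qed.

Lemma iint_unchanged_extend G x S S' : lookup G x = None ->
  iint_unchanged (update G x TIint) S S' -> iint_unchanged G S S'.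
Proof.
  intros Hx HS y Hy. apply HS. simpl. destruct (Nat.eqb_spec y x); congruence.
Qed.

Lemma iint_unchanged_trans G S1 S2 S3 :
  iint_unchanged G S1 S2 -> iint_unchanged G S2 S3 -> iint_unchanged G S1 S3.
Proof. intros H12 H23 y Hy. rewrite H23, H12; auto. Qed.

Lemma iint_unchanged_bounded G S S' n :
  iint_unchanged G S S' -> iint_bounded G S n -> iint_bounded G S' n.
Proof. intros HS HB y u Hy Hu. rewrite HS in Hu by exact Hy. eauto. Qed.

Lemma loop_exec_iint_unchanged_mut :
  (forall S s S', exec S s S' ->
     forall G G', styp G true s G' -> iint_unchanged G S S') /\
  (forall S ss S', exec_seq S ss S' ->
     forall G G', styp_seq G true ss G' -> iint_unchanged G S S') /\
  (forall S x s j i S', exec_loop S x s j i S' ->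
     forall G G1, lookup G x = None -> styp (update G x TIint) true s G1 ->
     iint_unchanged G S S').
Proof.
  apply exec_mutind.
  - intros S t x _ G G' Hty. inversion Hty; subst.
    apply iint_unchanged_update. congruence.
  - intros S x G G' Hty. inversion Hty; subst.
    apply iint_unchanged_update. congruence.
  - intros S x e v _ _ G G' Hty. inversion Hty; subst.
    apply iint_unchanged_update. intros Hx. assert (tx = TIint) by congruence. tauto.
  - intros S ss S' _ IH G G' Hty. inversion Hty; subst. eauto.
  - intros S e s1 s2 S' _ _ IH G G' Hty. inversion Hty; subst. eauto.
  - intros S e s1 s2 S' _ _ IH G G' Hty. inversion Hty; subst. eauto.
  - intros S x e s i S' _ _ IH G G' Hty. inversion Hty; subst. eauto.
  - intros S G G' _ y _. reflexivity.
  - intros S s ss S1 S2 _ IH1 _ IH2 G G2 Hty.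
    inversion Hty as [| ? ? ? ? G1 ? Hty1 Hty2]; subst.
    apply (iint_unchanged_trans _ _ S1); [eauto |].
    intros y Hy. apply (IH2 _ _ Hty2). eapply styp_extends; eauto.
  - intros S x s j i _ G G1 _ _ y _. reflexivity.
  - intros S x s j i S1 S' _ _ IHb _ IHl G G1 Hx Hty.
    apply (iint_unchanged_trans _ _ S1); [| eauto].
    apply (iint_unchanged_trans _ _ (update S x (VInt j))).
    + apply iint_unchanged_update. congruence.
    + eapply iint_unchanged_extend; eauto.
Qed.

Lemma loop_exec_iint_unchanged G s G' S S' : styp G true s G' -> exec S s S' ->
  iint_unchanged G S S'.
Proof. intros Hty Hex. exact (proj1 loop_exec_iint_unchanged_mut _ _ _ Hex _ _ Hty). Qed.

Lemma loop_exec_iint_bounded G s G' S S' n : styp G true s G' -> exec S s S' ->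
  iint_bounded G S n -> iint_bounded G' S' n.
Proof.
  intros Hty Hex HB y u Hy.
  apply (iint_unchanged_bounded G S S' n (loop_exec_iint_unchanged _ _ _ _ _ Hty Hex) HB).
  exact (styp_loop_iint _ _ _ _ Hty Hy).
Qed.

Definition loop_growth (s : stmt) (C d : nat) : Prop :=
  forall G G' S S' n, styp G true s G' -> exec S s S' -> iint_bounded G S n ->
  sz S' <= sz S + C * (n + 1) ^ d.

Definition top_growth (s : stmt) (C d : nat) : Prop :=
  forall G G' S S', styp G false s G' -> exec S s S' -> sz S' <= C * (sz S + 1) ^ d.

Section ForLoop.
Variables (x : var) (s : stmt) (Cb db : nat).
Hypothesis body_growth : loop_growth s Cb db.

Lemma loop_iterations_growth G G1 n N :
  lookup G x = None -> styp (update G x TIint) true s G1 -> n <= N ->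
  forall S j i S', exec_loop S x s j i S' -> (0 <= j)%Z -> (i <= Z.of_nat N)%Z ->
  iint_bounded G S n -> sz S' <= sz S + Z.to_nat (i - j) * (N + Cb * (N + 1) ^ db).
Proof.
  intros Hx Hty HnN S j i S' Hloop.
  induction Hloop as [S ? ? j i Hij | S ? ? j i S1 S' Hji Hbody _ IH]; intros Hj Hi HB; [lia |].
  set (Sj := update S x (VInt j)).
  assert (HszSj : sz Sj <= sz S + N).
  { pose proof (sz_update_le S x (VInt j)). pose proof (szv_VInt_le j N Hj ltac:(lia)).
    unfold Sj; lia. }
  assert (HBj : iint_bounded (update G x TIint) Sj N).
  { intros y u Hy Hu. unfold Sj in Hu. simpl in Hy, Hu. destruct (Nat.eqb y x).
    - injection Hu as <-. apply szv_VInt_le; lia.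
    - specialize (HB y u Hy Hu). lia. }
  assert (HB1 : iint_bounded G S1 n).
  { apply (iint_unchanged_bounded G S); auto.
    apply (iint_unchanged_trans _ _ Sj).
    - apply iint_unchanged_update. congruence.
    - eapply iint_unchanged_extend, loop_exec_iint_unchanged; eauto. }
  pose proof (body_growth _ _ _ _ _ Hty Hbody HBj) as Hgrow. fold Sj in Hgrow.
  specialize (IH body_growth Hx Hty ltac:(lia) Hi HB1).
  replace (Z.to_nat (i - j)) with (Datatypes.S (Z.to_nat (i - (j + 1)))) by lia.
  simpl. set (K := N + Cb * (N + 1) ^ db) in *. nia.
Qed.

Lemma for_growth e G l G1 S S' n :
  etyp G l (EUn OSize e) TIint -> lookup G x = None ->
  styp (update G x TIint) true s G1 -> exec S (SFor x e s) S' -> iint_bounded G S n ->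
  sz S' <= sz S + ((Cb + 1) * (expr_weight e + 1) ^ (db + 2)) * (n + 1) ^ (db + 2).
Proof.
  intros Hte Hx Hty Hex HB.
  inversion Hex as [| | | | | | ? ? ? ? i ? Hev Hloop]; subst.
  inversion Hev as [| | | | ? ? ? v ? Hev' Hsize | |]; subst.
  destruct v as [z|]; inversion Hsize; subst.
  assert (Htye : etyp G l e TIint).
  { inversion Hte; subst. destruct t; try discriminate; auto. }
  set (N := n + expr_weight e).
  assert (HzN : (zsize z <= Z.of_nat N)%Z).
  { pose proof (eval_iint_szv_le _ _ _ _ _ _ Htye Hev' HB). simpl in *.
    pose proof (zsize_nonneg z). unfold N. lia. }
  pose proof (loop_iterations_growth G G1 n N Hx Hty ltac:(lia) _ _ _ _ Hloop
                ltac:(lia) HzN HB).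
  pose proof (poly_bound_iterate N Cb db).
  pose proof (succ_add_pow_le n (expr_weight e) (db + 2)).
  assert (Z.to_nat (zsize z - 0) <= N) by lia.
  set (K := N + Cb * (N + 1) ^ db) in *. unfold N in *. nia.
Qed.

End ForLoop.

Section NestedInduction.
Variable P : stmt -> Prop.
Hypothesis P_decl : forall t x, P (SDecl t x).
Hypothesis P_assign : forall x e, P (SAssign x e).
Hypothesis P_block : forall ss, Forall P ss -> P (SBlock ss).
Hypothesis P_if : forall e s1 s2, P s1 -> P s2 -> P (SIf e s1 s2).
Hypothesis P_for : forall x e s, P s -> P (SFor x e s).

Fixpoint stmt_nested_ind (s : stmt) : P s :=
  match s with
  | SDecl t x => P_decl t x
  | SAssign x e => P_assign x e
  | SBlock ss => P_block ss ((fix all (l : list stmt) : Forall P l :=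
       match l with
       | [] => Forall_nil _
       | s :: l => Forall_cons _ (stmt_nested_ind s) (all l)
       end) ss)
  | SIf e s1 s2 => P_if e s1 s2 (stmt_nested_ind s1) (stmt_nested_ind s2)
  | SFor x e s => P_for x e s (stmt_nested_ind s)
  end.
End NestedInduction.

Lemma loop_growth_block ss : Forall (fun s => exists C d, loop_growth s C d) ss ->
  exists C d, forall G G' S S' n, styp_seq G true ss G' -> exec_seq S ss S' ->
  iint_bounded G S n -> sz S' <= sz S + C * (n + 1) ^ d.
Proof.
  induction 1 as [| s ss [C1 [d1 Hs]] _ [C2 [d2 Hss]]].
  - exists 0, 0. intros G G' S S' n _ Hex _. inversion Hex; subst. lia.
  - exists (C1 + C2), (d1 + d2). intros G G' S S' n Hty Hex HB.
    inversion Hty as [| ? ? ? ? G1 ? Hty1 Hty2]; subst.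
    inversion Hex as [| ? ? ? S1 ? Hex1 Hex2]; subst.
    pose proof (Hs _ _ _ _ _ Hty1 Hex1 HB).
    pose proof (Hss _ _ _ _ _ Hty2 Hex2 (loop_exec_iint_bounded _ _ _ _ _ _ Hty1 Hex1 HB)).
    pose proof (poly_bound_add n C1 d1 C2 d2). lia.
Qed.

Lemma loop_growth_exists s : exists C d, loop_growth s C d.
Proof.
  induction s as [t x | x e | ss Hss | e s1 s2 [C1 [d1 H1]] [C2 [d2 H2]]
                 | x e s [Cb [db Hb]]] using stmt_nested_ind.
  - exists 1, 0. intros G G' S S' n _ Hex _.
    pose proof (sz_exec_decl _ _ _ _ Hex). simpl. lia.
  - exists (expr_weight e), 0. intros G G' S S' n _ Hex _.
    pose proof (sz_exec_assign _ _ _ _ Hex). simpl. lia.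
  - destruct (loop_growth_block ss Hss) as [C [d Hblock]]. exists C, d.
    intros G G' S S' n Hty Hex HB. inversion Hty; inversion Hex; subst. eauto.
  - exists (C1 + C2), (d1 + d2). intros G G' S S' n Hty Hex HB.
    pose proof (poly_bound_add n C1 d1 C2 d2).
    inversion Hty; inversion Hex; subst.
    + pose proof (H1 _ _ _ _ _ ltac:(eassumption) ltac:(eassumption) HB). lia.
    + pose proof (H2 _ _ _ _ _ ltac:(eassumption) ltac:(eassumption) HB). lia.
  - exists ((Cb + 1) * (expr_weight e + 1) ^ (db + 2)), (db + 2).
    intros G G' S S' n Hty Hex HB. inversion Hty; subst.
    eapply for_growth; eauto.
Qed.

Lemma top_growth_block ss : Forall (fun s => exists C d, top_growth s C d) ss ->
  exists C d, forall G G' S S', styp_seq G false ss G' -> exec_seq S ss S' ->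
  sz S' <= C * (sz S + 1) ^ d.
Proof.
  induction 1 as [| s ss [C1 [d1 Hs]] _ [C2 [d2 Hss]]].
  - exists 1, 1. intros G G' S S' _ Hex. inversion Hex; subst. rewrite Nat.pow_1_r. lia.
  - exists (C2 * (C1 + 1) ^ d2), (d1 * d2). intros G G' S S' Hty Hex.
    inversion Hty as [| ? ? ? ? G1 ? Hty1 Hty2]; subst.
    inversion Hex as [| ? ? ? S1 ? Hex1 Hex2]; subst.
    pose proof (Hss _ _ _ _ Hty2 Hex2).
    pose proof (poly_bound_comp _ _ _ _ C2 d2 (Hs _ _ _ _ Hty1 Hex1)). lia.
Qed.

Lemma top_growth_exists s : exists C d, top_growth s C d.
Proof.
  induction s as [t x | x e | ss Hss | e s1 s2 [C1 [d1 H1]] [C2 [d2 H2]]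
                 | x e s _] using stmt_nested_ind.
  - exists 1, 1. intros G G' S S' _ Hex.
    pose proof (sz_exec_decl _ _ _ _ Hex). rewrite Nat.pow_1_r. lia.
  - exists (expr_weight e + 1), 1. intros G G' S S' _ Hex.
    pose proof (sz_exec_assign _ _ _ _ Hex). rewrite Nat.pow_1_r. nia.
  - destruct (top_growth_block ss Hss) as [C [d Hblock]]. exists C, d.
    intros G G' S S' Hty Hex. inversion Hty; inversion Hex; subst. eauto.
  - exists (C1 + C2), (d1 + d2). intros G G' S S' Hty Hex.
    pose proof (poly_bound_add (sz S) C1 d1 C2 d2).
    inversion Hty; inversion Hex; subst.
    + pose proof (H1 _ _ _ _ ltac:(eassumption) ltac:(eassumption)). lia.
    + pose proof (H2 _ _ _ _ ltac:(eassumption) ltac:(eassumption)). lia.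
  - destruct (loop_growth_exists s) as [Cb [db Hb]].
    set (C := (Cb + 1) * (expr_weight e + 1) ^ (db + 2)).
    exists (C + 1), (db + 2 + 1). intros G G' S S' Hty Hex.
    inversion Hty as [| | | | ? ? ? ? ? G1 Hte Hx Hbody]; subst.
    pose proof (for_growth x s Cb db Hb e _ _ _ S S' (sz S) Hte Hx Hbody Hex
                  (iint_bounded_sz _ S)).
    pose proof (poly_bound_absorb (sz S) C (db + 2)). lia.
Qed.

Theorem lemma7 :
  forall (s : stmt) (l : bool),
  exists C d k : nat,
  forall (G G' : tenv) (S S' : store),
    consistent G S -> styp G l s G' -> exec S s S' ->
    (l = true -> (sz S' - sz S <= C * (sz_restr_I S G ^ d + 1))%nat) /\
    (l = false -> (sz S' - sz S <= C * (sz S ^ (d ^ k) + 1))%nat).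
Proof.
  intros s [|].
  - destruct (loop_growth_exists s) as [C [d Hs]]. exists (C * 2 ^ d), d, 0.
    intros G G' S S' _ Hty Hex. split; [intros _ | discriminate].
    pose proof (Hs _ _ _ _ _ Hty Hex (iint_bounded_sz_restr_I G S)).
    pose proof (succ_pow_le (sz_restr_I S G) d). nia.
  - destruct (top_growth_exists s) as [C [d Hs]]. exists (C * 2 ^ d), d, 1.
    intros G G' S S' _ Hty Hex. split; [discriminate | intros _].
    pose proof (Hs _ _ _ _ Hty Hex). rewrite Nat.pow_1_r.
    pose proof (succ_pow_le (sz S) d). nia.
Qed.
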